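(* Any algorithm that returns islands compatible with those returned by overlap-greedy has approximation ratio $\Omega(\max\{\mathrm{Opt}_{\mathrm{P}},\sqrt{n}\})$. That is, there exist a constant $c>0$ and inputs $S$ with arbitrarily large $n$ and arbitrarily large $\mathrm{Opt}_{\mathrm{P}}(S)$ such that, if $I_1,\dots,I_m$ are the islands returned by overlap-greedy on $S$, every set of islands compatible with $I_1,\dots,I_m$ has cardinality at least $c\cdot\max\{\mathrm{Opt}_{\mathrm{P}}(S),\sqrt{n}\}\cdot \mathrm{Opt}_{\mathrm{P}}(S)$.
   Context: The input is a set $S$ of $n$ points in the plane, each having one of $k\ge 2$ colors. A set of points is monochromatic if all its points have the same color. An island is a subset $I\subseteq S$ with $\mathrm{CH}(I)\cap S=I$, where $\mathrm{CH}(I)$ is the convex hull of $I$. An island partition of $S$ is a partition of $S$ into monochromatic islands whose convex hulls are pairwise disjoint; $\mathrm{Opt}_{\mathrm{P}}(S)$ denotes its minimum possible cardinality. Overlap-greedy computes an island cover (islands may overlap): it repeatedly chooses a monochromatic island covering the maximum number of not-yet-covered points of $S$, breaking ties by choosing an island covering the fewest previously covered points, until all of $S$ is covered; it returns the chosen islands $I_1,\dots,I_m$ in order. Families $\mathcal{I}'_1,\dots,\mathcal{I}'_m$ of islands are compatible with islands $I_1,\dots,I_m$ if (i) $\bigcup_k\bigcup\mathcal{I}'_k=\bigcup_i I_i$, (ii) $\bigcup\mathcal{I}'_i\subseteq I_i$ for every $i$, and (iii) the islands in $\bigcup_k\mathcal{I}'_k$ are pairwise disjoint (their convex hulls are pairwise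 disjoint). Islands $I'_1,\dots,I'_{m'}$ are compatible with $I_1,\dots,I_m$ if $\{I'_1,\dots,I'_{m'}\}$ can be partitioned into families compatible with $I_1,\dots,I_m$. *)

(* points of the plane have coordinates in an arbitrary
   R : realType; the input S is given by an injective map p : 'I_n -> R * R
   (so S has exactly n distinct points) and colours col : 'I_n -> 'I_k. *)
From HB Require Import structures.
From mathcomp Require Import all_boot all_order all_algebra.
From mathcomp Require Import reals.
Set Implicit Arguments. Unset Strict Implicit. Unset Printing Implicit Defensive.
Import Order.TTheory GRing.Theory Num.Theory.
Local Open Scope ring_scope.

Section Islands.
Variables (R : realType) (n k : nat) (p : 'I_n -> R * R) (col : 'I_n -> 'I_k).

Definition in_hull (I : {set 'I_n}) (q : R * R) : Prop :=
  exists w : 'I_n -> R,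
    (forall i, 0 <= w i) /\ (forall i, i \notin I -> w i = 0) /\
    \sum_i w i = 1 /\
    \sum_i w i * (p i).1 = q.1 /\ \sum_i w i * (p i).2 = q.2.

Definition hulls_disjoint (I J : {set 'I_n}) : Prop :=
  ~ exists q, in_hull I q /\ in_hull J q.

Definition monochromatic (I : {set 'I_n}) : Prop :=
  forall i j, i \in I -> j \in I -> col i = col j.

Definition island (I : {set 'I_n}) : Prop :=
  forall j, in_hull I (p j) -> j \in I.

Definition mono_island (I : {set 'I_n}) : Prop := monochromatic I /\ island I.

Definition island_partition (P : {set {set 'I_n}}) : Prop :=
  partition P [set: 'I_n] /\
  (forall I, I \in P -> mono_island I) /\
  (forall I J, I \in P -> J \in P -> I != J -> hulls_disjoint I J).

Definition is_OptP (m : nat) : Prop :=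
  (exists P, island_partition P /\ #|P| = m) /\
  (forall P, island_partition P -> (m <= #|P|)%N).

Definition covered (Is : seq {set 'I_n}) (t : nat) : {set 'I_n} :=
  \bigcup_(J <- take t Is) J.

(* Is = [:: I_1; ...; I_m] is a possible output of overlap-greedy
   (any tie-breaking beyond the stated rule is allowed) *)
Definition overlap_greedy_output (Is : seq {set 'I_n}) : Prop :=
  (forall t, (t < size Is)%N ->
     let C := covered Is t in
     let I := nth set0 Is t in
     C != [set: 'I_n] /\ mono_island I /\
     (forall J, mono_island J ->
        (#|J :\: C| <= #|I :\: C|)%N /\
        (#|J :\: C| = #|I :\: C| -> (#|I :&: C| <= #|J :&: C|)%N))) /\
  covered Is (size Is) = [set: 'I_n].

Definition compatible (Q : {set {set 'I_n}}) (Is : seq {set 'I_n}) : Prop :=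
  (forall J, J \in Q -> island J) /\
  exists F : nat -> {set {set 'I_n}},
    Q = \bigcup_(t < size Is) F t /\
    (forall s t, (s < size Is)%N -> (t < size Is)%N -> s != t ->
       [disjoint F s & F t]) /\
    \bigcup_(t < size Is) \bigcup_(J in F t) J = \bigcup_(I <- Is) I /\
    (forall t, (t < size Is)%N -> \bigcup_(J in F t) J \subset nth set0 Is t) /\
    (forall J K, J \in Q -> K \in Q -> J != K -> hulls_disjoint J K).

End Islands.

From HB Require Import structures.
From mathcomp Require Import all_boot all_order all_algebra.
From mathcomp Require Import reals.
From mathcomp Require Import ring lra zify.
From Stdlib Require Import Classical.
Import Order.TTheory GRing.Theory Num.Theory.
Local Open Scope ring_scope.
Set Implicit Arguments. Unset Strict Implicit. Unset Printing Implicit Defensive.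

(* For a parameter M, take M + 1 red rows, row a at height 2a + 2 with colour a + 1 and
   points at every integer abscissa in [0, 4M + 4], interleaved with M + 1 blue columns,
   column s at abscissa 4s + 1/2 with points at the heights 1, 3, ..., 2M + 3. The
   horizontal layers partition S into at most 2M + 4 islands, and the M + 1 red colours
   force at least M + 1, so Opt_P = Theta(M) while n = Theta(M^2).
   The hull of a blue island cannot jump over a red row segment. Hence the points of a
   blue island either lie on pairwise distinct levels with columns in arithmetic
   progression, or they all lie on one level; so a blue island with M + 2 points is a
   whole column, and overlap-greedy only returns red islands and whole blue columns.
   In a compatible family every one of the (M + 1)^2 crossings of a row with a column
   must be cut on the red side or on the blue side, and charging each crossing to the
   piece beyond the cut is injective, so the family has at least (M + 1)^2 islands. *)

Lemma invr_bounds (F : numFieldType) (x : F) : 1 <= x -> 0 <= x^-1 <= 1.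
Proof. by move=> x_ge1; rewrite invr_ge0 invf_le1 ?(le_trans ler01) ?(lt_le_trans ltr01). Qed.

Lemma half_bounds (F : numFieldType) : 0 <= (2^-1 : F) <= 1.
Proof. by apply: invr_bounds; rewrite ler1n. Qed.

Lemma dist_natr_ge1 (F : realDomainType) (x y : nat) : x != y -> 1 <= `|x%:R - y%:R : F|.
Proof.
rewrite ler_normr; case: (ltngtP x y) => // lt _; apply/orP; [right|left];
  by move: lt; rewrite -(ler_nat F) -natr1; lra.
Qed.

Section ConvexHull.
Variables (R : realType) (n : nat) (p : 'I_n -> R * R).
Implicit Types (I : {set 'I_n}) (q : R * R).

Lemma in_hull_mem I i : i \in I -> in_hull p I (p i).
Proof.
move=> iI; exists (fun j => (j == i)%:R); split; [|split; [|split; [|split]]].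
- by move=> j; rewrite ler0n.
- by move=> j jI; case: eqP => // E; rewrite E iI in jI.
- by rewrite (bigD1 i) //= eqxx big1 ?addr0 // => j /negbTE ->.
- by rewrite (bigD1 i) //= eqxx mul1r big1 ?addr0 // => j /negbTE ->; rewrite mul0r.
- by rewrite (bigD1 i) //= eqxx mul1r big1 ?addr0 // => j /negbTE ->; rewrite mul0r.
Qed.

Lemma in_hull_conv I q1 q2 q (l : R) :
  in_hull p I q1 -> in_hull p I q2 -> 0 <= l <= 1 ->
  q = (l * q1.1 + (1 - l) * q2.1, l * q1.2 + (1 - l) * q2.2) -> in_hull p I q.
Proof.
move=> [w1 [w1p [w1z [w1s [w1x w1y]]]]] [w2 [w2p [w2z [w2s [w2x w2y]]]]].
move=> /andP[l0 l1] ->.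
exists (fun j => l * w1 j + (1 - l) * w2 j); split; [|split; [|split; [|split]]].
- by move=> j; apply: addr_ge0; apply: mulr_ge0 => //; lra.
- by move=> j jI; rewrite w1z // w2z // !mulr0 addr0.
- by rewrite big_split /= -!mulr_sumr w1s w2s; lra.
- rewrite /= -w1x -w2x !mulr_sumr -big_split /=; apply: eq_bigr => j _; lra.
- rewrite /= -w1y -w2y !mulr_sumr -big_split /=; apply: eq_bigr => j _; lra.
Qed.

Lemma in_hull_le I q (a b g : R) :
  (forall i, i \in I -> a * (p i).1 + b * (p i).2 <= g) ->
  in_hull p I q -> a * q.1 + b * q.2 <= g.
Proof.
move=> le_g [w [wp [wz [ws [wx wy]]]]].
rewrite -wx -wy !mulr_sumr -big_split /=.
have -> : g = \sum_i w i * g by rewrite -mulr_suml ws mul1r.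
apply: ler_sum => j _; case: (boolP (j \in I)) => jI.
  by have := le_g j jI; have := wp j; nra.
by rewrite wz // !mul0r; lra.
Qed.

Lemma in_hull_eq I q (a b g : R) :
  (forall i, i \in I -> a * (p i).1 + b * (p i).2 = g) ->
  in_hull p I q -> a * q.1 + b * q.2 = g.
Proof.
move=> eq_g hq; apply/eqP; rewrite eq_le; apply/andP; split.
  by apply: in_hull_le hq => i /eq_g ->.
have : - a * q.1 + - b * q.2 <= - g.
  by apply: in_hull_le hq => i /eq_g <-; lra.
lra.
Qed.

Lemma in_hull_fst I q c : (forall i, i \in I -> (p i).1 = c) -> in_hull p I q -> q.1 = c.
Proof.
move=> eq_c /(in_hull_eq (a := 1) (b := 0) (g := c)); rewrite mul1r mul0r addr0.
by apply=> i /eq_c ->; rewrite mul1r mul0r addr0.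
Qed.

Lemma in_hull_snd I q c : (forall i, i \in I -> (p i).2 = c) -> in_hull p I q -> q.2 = c.
Proof.
move=> eq_c /(in_hull_eq (a := 0) (b := 1) (g := c)); rewrite mul1r mul0r add0r.
by apply=> i /eq_c ->; rewrite mul1r mul0r add0r.
Qed.

Lemma in_hull_set1 i q : in_hull p [set i] q -> q = p i.
Proof.
move=> hq; rewrite [q]surjective_pairing [p i]surjective_pairing.
by congr pair; [apply: in_hull_fst hq | apply: in_hull_snd hq] => j /set1P ->.
Qed.

End ConvexHull.

Lemma mem_covered (n : nat) (Is : seq {set 'I_n}) t x :
  reflect (exists2 t', (t' < minn t (size Is))%N & x \in nth set0 Is t')
          (x \in covered Is t).
Proof.
rewrite /covered bigcup_seq; apply: (iffP bigcupP).
- move=> [J /(nthP set0) [t' lt' <-] xJ].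
  have lt2 : (t' < minn t (size Is))%N by move: lt'; rewrite size_take_min minnC.
  exists t' => //; move: xJ; rewrite nth_take //.
  by rewrite (leq_trans lt2) // geq_minl.
- move=> [t' lt' xt']; exists (nth set0 Is t') => //.
  apply/(nthP set0); exists t'; first by rewrite size_take_min.
  by rewrite nth_take // (leq_trans lt') // geq_minl.
Qed.

Lemma is_OptP_exists (R : realType) n k (p : 'I_n -> R * R) (col : 'I_n -> 'I_k) P :
  island_partition p col P -> exists2 o, is_OptP p col o & (o <= #|P|)%N.
Proof.
move: {2}#|P| (leqnn #|P|) => m; elim/ltn_ind: m P => m IH P cardP partP.
case: (classic (exists2 P', island_partition p col P' & (#|P'| < #|P|)%N)).
  move=> [P' partP' ltP'].
  have [o optP' le_o] := IH _ (leq_trans ltP' cardP) P' (leqnn _) partP'.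
  by exists o => //; apply: leq_trans le_o (ltnW ltP').
move=> noP; exists #|P| => //; split; first by exists P.
move=> P' partP'; rewrite leqNgt; apply/negP => ltP'; apply: noP; by exists P'.
Qed.

Section ArithmeticProgression.
Local Open Scope nat_scope.
Variables (F : nat -> nat) (L : nat).
Hypothesis F_arith : forall k, k + 2 <= L -> 2 * F k.+1 = F k + F k.+2.

Lemma arithmetic_closed_form k : k <= L -> F k + k * F 0 = F 0 + k * F 1.
Proof.
elim/ltn_ind: k => -[|[|k]] IH kL; [lia | lia |].
have := F_arith (k := k) ltac:(lia); have := IH k ltac:(lia) ltac:(lia).
have := IH k.+1 ltac:(lia) ltac:(lia); nia.
Qed.

Lemma bounded_arithmetic_const B :
  (forall k, k <= L -> F k <= B) -> B < L -> forall k, k <= L -> F k = F 0.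
Proof.
move=> F_le BL.
have F1 : F 1 = F 0.
  have := arithmetic_closed_form (leqnn L); have := F_le L (leqnn L); have := F_le 0 (leq0n L).
  nia.
by move=> k kL; have := arithmetic_closed_form kL; rewrite F1; nia.
Qed.

End ArithmeticProgression.

Section CompatibleIslands.
Variables (R : realType) (n k : nat) (p : 'I_n -> R * R) (col : 'I_n -> 'I_k).
Variables (Is : seq {set 'I_n}) (Q : {set {set 'I_n}}).
Hypothesis compQ : compatible p Q Is.

Lemma compatible_subset_nth J : J \in Q -> exists2 t, (t < size Is)%N & J \subset nth set0 Is t.
Proof.
have [_ [F [-> [_ [_ [subF _]]]]]] := compQ.
case/bigcupP => t _ JF; exists t => //; apply: subset_trans (subF t (ltn_ord t)).
by apply/subsetP => x xJ; apply/bigcupP; exists J.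
Qed.

Lemma compatible_mono : overlap_greedy_output p col Is -> forall J, J \in Q -> monochromatic col J.
Proof.
move=> [greedy _] J /compatible_subset_nth[t tIs /subsetP sub] x y xJ yJ.
by have [_ [[mono _] _]] := greedy t tIs; apply: mono; apply: sub.
Qed.

Lemma compatible_cover : overlap_greedy_output p col Is -> forall x, exists2 J, J \in Q & x \in J.
Proof.
have [_ [F [-> [_ [covF _]]]]] := compQ.
move=> [_ cov] x; have : x \in covered Is (size Is) by rewrite cov inE.
rewrite /covered take_size -covF => /bigcupP[t _ /bigcupP[J JF xJ]].
by exists J => //; apply/bigcupP; exists t.
Qed.

End CompatibleIslands.

Lemma max_sqrt_mul_le (R : rcfType) (m o n q : nat) :
  (o <= 4 * m)%N -> (n <= 16 * (m * m))%N -> (m * m <= q)%N ->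
  16^-1 * Num.max o%:R (Num.sqrt n%:R) * o%:R <= q%:R :> R.
Proof.
move=> om nm mq; have m4_ge0 : (0 : R) <= 4 * m%:R by rewrite mulr_ge0 ?ler0n.
have o_le : (o%:R : R) <= 4 * m%:R by rewrite -natrM ler_nat.
have sqrt_le : Num.sqrt (n%:R : R) <= 4 * m%:R.
  rewrite -[X in _ <= X]ger0_norm // -sqrtr_sqr ler_wsqrtr //.
  by rewrite -natrM -natrX ler_nat; lia.
have max_le : Num.max (o%:R : R) (Num.sqrt n%:R) <= 4 * m%:R by rewrite ge_max o_le sqrt_le.
have : Num.max (o%:R : R) (Num.sqrt n%:R) * o%:R <= (4 * m%:R) * (4 * m%:R).
  by apply: ler_pM => //; rewrite le_max ler0n.
have : ((m * m)%N%:R : R) <= q%:R by rewrite ler_nat.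
rewrite natrM; lra.
Qed.

Section Construction.
Variables (R : realType) (M : nat).

Definition width := (4 * M.+1).+1.

(* [inl (a, x)] is the red point (x, 2a+2) of row a, coloured a+1;
   [inr (s, j)] is the blue point (4s+1/2, 2j+1) of column s, coloured 0. *)
Definition site := ('I_M.+1 * 'I_width + 'I_M.+1 * 'I_M.+2)%type.

Definition npts := #|{: site}|.
Definition site_of (i : 'I_npts) : site := enum_val i.
Definition pt (q : site) : 'I_npts := enum_rank q.

Lemma ptK : cancel pt site_of. Proof. exact: enum_rankK. Qed.
Lemma site_ofK : cancel site_of pt. Proof. exact: enum_valK. Qed.

Definition height (q : site) : nat :=
  match q with inl (a, _) => (2 * a + 2)%N | inr (_, j) => (2 * j + 1)%N end.

Definition place (q : site) : R * R :=
  match q with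
  | inl (a, x) => ((x : nat)%:R, 2 * (a : nat)%:R + 2)
  | inr (s, j) => (4 * (s : nat)%:R + 2^-1, 2 * (j : nat)%:R + 1)
  end.

Definition hue (q : site) : 'I_M.+2 := if q is inl (a, _) then inord a.+1 else ord0.

Definition pos (i : 'I_npts) : R * R := place (site_of i).
Definition colour (i : 'I_npts) : 'I_M.+2 := hue (site_of i).
Definition blue : {pred 'I_npts} := [pred i | if site_of i is inr _ then true else false].

Definition column (i : 'I_npts) : 'I_M.+1 :=
  match site_of i with inl (s, _) | inr (s, _) => s end.
Definition level (i : 'I_npts) : 'I_M.+2 := if site_of i is inr (_, j) then j else ord0.

Definition column_set (s : 'I_M.+1) : {set 'I_npts} := [set pt (inr (s, j)) | j : 'I_M.+2].

Lemma inordS_val (a : 'I_M.+1) : (inord a.+1 : 'I_M.+2) = a.+1 :> nat.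
Proof. by rewrite inordK // ltnS ltn_ord. Qed.

Lemma inordS_neq0 (a : 'I_M.+1) : (inord a.+1 : 'I_M.+2) != ord0.
Proof. by rewrite -val_eqE /= inordS_val. Qed.

Lemma inordS_inj (a a' : 'I_M.+1) : (inord a.+1 : 'I_M.+2) = inord a'.+1 -> a = a'.
Proof. by move/(congr1 val); rewrite /= !inordS_val => -[] /val_inj. Qed.

Lemma colour_eq0 i : (colour i == ord0) = (i \in blue).
Proof.
by rewrite /colour inE; case: (site_of i) => [[a x]|//]; rewrite (negbTE (inordS_neq0 a)).
Qed.

Lemma blueP i : i \in blue -> site_of i = inr (column i, level i).
Proof. by rewrite inE /column /level; case: (site_of i) => [//|[]]. Qed.

Lemma pos_red a x : pos (pt (inl (a, x))) = ((x : nat)%:R, 2 * (a : nat)%:R + 2).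
Proof. by rewrite /pos ptK. Qed.

Lemma pos_blue i : i \in blue ->
  pos i = (4 * (column i : nat)%:R + 2^-1, 2 * (level i : nat)%:R + 1).
Proof. by move/blueP; rewrite /pos => ->. Qed.

Lemma pos_snd i : (pos i).2 = (height (site_of i))%:R.
Proof. by rewrite /pos; case: (site_of i) => [[a x]|[s l]]; rewrite /= natrD natrM. Qed.

Lemma pos_inj : injective pos.
Proof.
move=> i j e; rewrite -[i]site_ofK -[j]site_ofK; congr pt.
have /eqP := congr1 snd e; rewrite !pos_snd eqr_nat => /eqP; move: e; rewrite /pos.
case: (site_of i) => [[a x]|[s l]]; case: (site_of j) => [[a' x']|[s' l']] /= [e1 _] e2;
  try lia.
- move/eqP: e1; rewrite eqr_nat => /eqP e1.
  by congr (inl (_, _)); apply: ord_inj; lia.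
- have /eqP : (s : nat)%:R = (s' : nat)%:R :> R by lra.
  by rewrite eqr_nat => /eqP e3; congr (inr (_, _)); apply: ord_inj; lia.
Qed.

Lemma blue_eq i j : i \in blue -> j \in blue -> column i = column j -> level i = level j -> i = j.
Proof.
by move=> /blueP bi /blueP bj ec el; rewrite -[i]site_ofK -[j]site_ofK bi bj ec el.
Qed.

Lemma blue_pt_inr s l : pt (inr (s, l)) \in blue. Proof. by rewrite inE ptK. Qed.
Lemma blue_pt_inl a x : (pt (inl (a, x)) \in blue) = false. Proof. by rewrite inE ptK. Qed.

Lemma mem_column_set i s : (i \in column_set s) = (i \in blue) && (column i == s).
Proof.
apply/imsetP/andP => [[l _ ->]|[bi /eqP <-]]; first by rewrite blue_pt_inr /column ptK.
by exists (level i); rewrite // -(blueP bi) site_ofK.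
Qed.

Lemma card_column_set s : #|column_set s| = M.+2.
Proof. by rewrite card_imset ?card_ord // => l l' /(can_inj ptK) [->]. Qed.

Lemma blue_hull_fst (J : {set 'I_npts}) q :
  {subset J <= blue} -> in_hull pos J q -> 0 <= q.1 <= 4 * (M.+1)%:R.
Proof.
move=> Jb hq; have half_gt0 : (0 : R) < 2^-1 by rewrite invr_gt0 ltr0n.
have half_le1 : (2^-1 : R) <= 1 by rewrite invf_le1 ?ler1n ?ltr0n.
have col_le i : ((column i : nat)%:R : R) <= M%:R by rewrite ler_nat -ltnS ltn_ord.
apply/andP; split.
- have : -1 * q.1 + 0 * q.2 <= 0.
    by apply: in_hull_le hq => i /Jb/pos_blue -> /=; have := ler0n R (column i); lra.
  lra.
- have : 1 * q.1 + 0 * q.2 <= 4 * (M.+1)%:R.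
    by apply: in_hull_le hq => i /Jb/pos_blue -> /=; have := col_le i; rewrite -natr1; lra.
  lra.
Qed.

Section BlueIsland.
Variable J : {set 'I_npts}.
Hypotheses (islJ : island pos J) (Jb : {subset J <= blue}).

(* Some red point of row [a] lies between [q1] and [q2]. *)
Lemma blue_island_row_gap (a : nat) q1 q2 : (a <= M)%N ->
  in_hull pos J q1 -> in_hull pos J q2 ->
  q1.2 = 2 * a%:R + 2 -> q2.2 = 2 * a%:R + 2 -> 1 <= `|q1.1 - q2.1| -> False.
Proof.
move=> aM; wlog le12 : q1 q2 / q1.1 <= q2.1 => [wlog_le|h1 h2 y1 y2].
  move=> h1 h2 y1 y2 gap; case: (lerP q1.1 q2.1) => [le|/ltW le].
    exact: wlog_le h1 h2 y1 y2 gap.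
  by apply: (wlog_le q2 q1) => //; rewrite distrC.
rewrite ler0_norm ?subr_le0 // => gap.
have /andP[q1_ge0 _] := blue_hull_fst Jb h1; have /andP[_ q2_le] := blue_hull_fst Jb h2.
pose m := Num.ceil q1.1.
have m_ge : q1.1 <= m%:~R := ceil_ge q1.1.
have m_lt : m%:~R - 1 < q1.1 by have := ceilB1_lt q1.1; rewrite rmorphB.
have m_ge0 : (0 <= m)%R by rewrite /m ceil_ge0; lra.
have m_nat : ((`|m|%N)%:R : R) = m%:~R by rewrite -[in RHS](gez0_abs m_ge0) pmulrn.
have m_lt_width : (`|m| < width)%N.
  by rewrite /width ltnS -(ler_nat R) m_nat natrM; lra.
pose r := pt (inl (Ordinal (aM : a < M.+1)%N, Ordinal m_lt_width)).
have : in_hull pos J (pos r).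
  pose l := (q2.1 - (`|m|%N)%:R) / (q2.1 - q1.1).
  apply: (in_hull_conv (l := l) h1 h2).
    by rewrite /l divr_ge0 ?ler_pdivrMr /=; lra.
  rewrite pos_red /= y1 y2; congr pair; last by lra.
  by rewrite /l; field; lra.
by move/islJ/Jb; rewrite /r blue_pt_inl.
Qed.

(* The segments from [qw] to [qu] and to [qv] meet row [a] at distance
   (1 - t) |qu.1 - qv.1| >= 1. *)
Lemma blue_island_wedge (a : nat) qu qv qw (t : R) : (a <= M)%N ->
  in_hull pos J qu -> in_hull pos J qv -> in_hull pos J qw -> qu.2 = qv.2 ->
  0 <= t <= 2^-1 -> t * qw.2 + (1 - t) * qu.2 = 2 * a%:R + 2 ->
  2 <= `|qu.1 - qv.1| -> False.
Proof.
move=> aM hu hv hw yuv /andP[t_ge0 t_le] row gap.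
have /andP[_ half_le1] := half_bounds R.
have t01 : 0 <= t <= 1 by rewrite t_ge0 (le_trans t_le half_le1).
apply: (blue_island_row_gap aM (in_hull_conv hw hu t01 erefl) (in_hull_conv hw hv t01 erefl)).
- by [].
- by rewrite /= -yuv.
- have -> : t * qw.1 + (1 - t) * qu.1 - (t * qw.1 + (1 - t) * qv.1) = (1 - t) * (qu.1 - qv.1).
    by ring.
  rewrite normrM ger0_norm; last by lra.
  have : (1 - t) * 2 <= (1 - t) * `|qu.1 - qv.1| by rewrite ler_wpM2l //; lra.
  lra.
Qed.

Lemma blue_island_same_level u v w : u \in J -> v \in J -> w \in J ->
  level u = level v -> level w != level u -> column u = column v.
Proof.
move=> uJ vJ wJ luv lwu; case: (eqVneq (column u) (column v)) => // cuv; exfalso.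
have hu := in_hull_mem pos uJ; have hv := in_hull_mem pos vJ; have hw := in_hull_mem pos wJ.
rewrite (pos_blue (Jb uJ)) in hu; rewrite (pos_blue (Jb vJ)) -luv in hv.
rewrite (pos_blue (Jb wJ)) in hw.
have gap : (2 : R) <= `|4 * (column u : nat)%:R + 2^-1 - (4 * (column v : nat)%:R + 2^-1)|.
  have -> : 4 * (column u : nat)%:R + 2^-1 - (4 * (column v : nat)%:R + 2^-1) =
            4 * ((column u : nat)%:R - (column v : nat)%:R) :> R by ring.
  by rewrite normrM normr_nat; have := dist_natr_ge1 R cuv; lra.
pose d : R := `|(level w : nat)%:R - (level u : nat)%:R|.
have d_ge1 : 1 <= d by apply: dist_natr_ge1.
(* With this [t] the wedge at [w] reaches the red row next to the level of [u]. *)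
pose t := (2 * d)^-1.
have t_bounds : 0 <= t <= 2^-1.
  have d2_gt0 : 0 < 2 * d by lra.
  have : t * (2 * d) = 1 by rewrite mulVf // lt0r_neq0.
  by rewrite /t invr_ge0 lef_pV2 ?posrE; lra.
case: (ltngtP (level u) (level w)) => [lt_uw|lt_wu|/val_inj eq_uw]; last first.
  by rewrite eq_uw eqxx in lwu.
- apply: (blue_island_wedge (a := (level u).-1) (t := t) _ hu hv hw erefl t_bounds) => //=.
    by have := ltn_ord (level u); lia.
  have -> : ((level u).-1%:R : R) = (level u : nat)%:R - 1.
    by rewrite -[in RHS](ltn_predK lt_wu) -natr1 addrK.
  rewrite /t /d ler0_norm; last by rewrite subr_le0 ler_nat ltnW.
  by field; rewrite subr_eq0 eqr_nat; lia.
- apply: (blue_island_wedge (a := level u) (t := t) _ hu hv hw erefl t_bounds) => //=.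
    by have := ltn_ord (level w); lia.
  rewrite /t /d ger0_norm; last by rewrite subr_ge0 ler_nat ltnW.
  by field; rewrite subr_eq0 eqr_nat; lia.
Qed.

(* Otherwise the midpoint of [u, v] and the point a quarter of the way from [u] to [w]
   lie on the row just above [u], at distance |2 column v - column u - column w|. *)
Lemma blue_island_column_step u v w : u \in J -> v \in J -> w \in J ->
  level v = (level u).+1 :> nat -> level w = (level u).+2 :> nat ->
  (2 * column v = column u + column w)%N.
Proof.
move=> uJ vJ wJ luv luw.
case: (eqVneq (2 * column v)%N (column u + column w)%N) => // ne; exfalso.
have uM : (level u <= M)%N by have := ltn_ord (level w); lia.
have hu := in_hull_mem pos uJ; have hv := in_hull_mem pos vJ; have hw := in_hull_mem pos wJ.
rewrite (pos_blue (Jb uJ)) in hu; rewrite (pos_blue (Jb vJ)) luv -natr1 in hv.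
rewrite (pos_blue (Jb wJ)) luw -!natr1 in hw.
have half := half_bounds R.
have quarter : 0 <= (4^-1 : R) <= 1 by apply: invr_bounds; rewrite ler1n.
apply: (blue_island_row_gap uM (in_hull_conv hu hv half erefl)
  (in_hull_conv hw hu quarter erefl)) => /=; try by field.
apply: le_trans (dist_natr_ge1 R ne) _; rewrite le_eqVlt; apply/orP; left; apply/eqP.
by congr `|_|; rewrite natrD natrM; field.
Qed.

Lemma blue_island_level_inj w1 w2 : w1 \in J -> w2 \in J -> level w1 != level w2 ->
  {in J &, injective level}.
Proof.
move=> w1J w2J l12 u v uJ vJ luv; apply: (blue_eq (Jb uJ) (Jb vJ) _ luv).
have [l1u|l1u] := eqVneq (level w1) (level u); last exact: blue_island_same_level uJ vJ w1J luv l1u.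
by apply: (blue_island_same_level uJ vJ w2J luv); rewrite -l1u eq_sym.
Qed.

Lemma large_blue_island_level_inj : (M.+2 <= #|J|)%N -> {in J &, injective level}.
Proof.
move=> cardJ.
case: (boolP [forall u in J, forall v in J, level u == level v]) => [same|].
  have column_inj : {in J &, injective column}.
    move=> u v uJ vJ cuv; apply: blue_eq (Jb uJ) (Jb vJ) cuv _.
    exact/eqP/(forall_inP (forall_inP same u uJ) v vJ).
  have := max_card (column @: J); rewrite card_in_imset // card_ord.
  by move/(leq_trans cardJ); rewrite ltnn.
case/forall_inPn => w1 w1J /forall_inPn [w2 w2J l12].
exact: blue_island_level_inj w1J w2J l12.
Qed.

Lemma large_blue_island_column : (M.+2 <= #|J|)%N -> exists s, J = column_set s.
Proof.
move=> cardJ; have level_inj := large_blue_island_level_inj cardJ.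
have level_onto : level @: J = [set: 'I_M.+2].
  by apply/eqP; rewrite eqEcard subsetT cardsT card_ord card_in_imset.
pose at_level (k : nat) := odflt (pt (inr (ord0, ord0))) [pick u in J | level u == inord k].
have at_levelP k : at_level k \in J /\ level (at_level k) = inord k.
  rewrite /at_level; case: pickP => [u /andP[uJ /eqP]|none] //=.
  have /imsetP[u uJ lu] : inord k \in level @: J by rewrite level_onto inE.
  by move: (none u); rewrite uJ -lu eqxx.
pose F k := column (at_level k).
have F_arith k : (k + 2 <= M.+1)%N -> (2 * F k.+1 = F k + F k.+2)%N.
  move=> kM; have [J0 l0] := at_levelP k; have [J1 l1] := at_levelP k.+1.
  have [J2 l2] := at_levelP k.+2.
  by apply: blue_island_column_step J0 J1 J2 _ _; rewrite ?l0 ?l1 ?l2 !inordK; lia.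
have F_const := bounded_arithmetic_const F_arith (fun k _ => leq_ord (F k)) (ltnSn M).
exists (F 0); apply/eqP; rewrite eqEcard card_column_set cardJ andbT.
apply/subsetP => u uJ; rewrite mem_column_set; apply/andP; split; first exact: Jb.
have [Ju lu] := at_levelP (level u).
have <- : at_level (level u) = u by apply: level_inj; rewrite // lu inord_val.
by apply/eqP/val_inj; exact: F_const (leq_ord _).
Qed.

End BlueIsland.

Lemma blue_colour i : i \in blue -> colour i = ord0.
Proof. by rewrite -colour_eq0 => /eqP. Qed.

Lemma pos_fst_column j (s : 'I_M.+1) :
  (pos j).1 = 4 * (s : nat)%:R + 2^-1 -> (j \in blue) && (column j == s).
Proof.
rewrite /pos inE /column; case: (site_of j) => [[a x]|[s' l]] /= e.
  have /eqP : ((2 * x)%N%:R : R) = (8 * s + 1)%N%:R by rewrite natrM natrD natrM e; field.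
  by rewrite eqr_nat => /eqP/(congr1 odd); rewrite oddD !oddM.
have /eqP : (s' : nat)%:R = (s : nat)%:R :> R by lra.
by rewrite eqr_nat => /eqP e'; apply/eqP/val_inj.
Qed.

Lemma column_set_mono_island s : mono_island pos colour (column_set s).
Proof.
split=> [i j|j hj].
  by rewrite !mem_column_set => /andP[/blue_colour-> _] /andP[/blue_colour-> _].
rewrite mem_column_set; apply: pos_fst_column; apply: in_hull_fst hj => i.
by rewrite mem_column_set => /andP[/pos_blue-> /eqP->].
Qed.

Lemma set1_mono_island u : mono_island pos colour [set u].
Proof.
split=> [i j /set1P-> /set1P->|j /in_hull_set1 /pos_inj->] //.
exact: set11.
Qed.

Definition red_or_column (I : {set 'I_npts}) : Prop :=
  (forall x, x \in I -> x \notin blue) \/ exists s, I = column_set s.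

Lemma nth_subset_covered (Is : seq {set 'I_npts}) t t' :
  (t' < minn t (size Is))%N -> nth set0 Is t' \subset covered Is t.
Proof. by move=> lt; apply/subsetP => x xI; apply/mem_covered; exists t'. Qed.

Lemma met_column_set_covered (Is : seq {set 'I_npts}) t s :
  (forall t', (t' < minn t (size Is))%N -> red_or_column (nth set0 Is t')) ->
  ~~ [disjoint column_set s & covered Is t] -> column_set s \subset covered Is t.
Proof.
move=> shape /pred0Pn[y /andP[/= ys /mem_covered[t' lt yt']]].
have [red|[s' Es']] := shape t' lt.
  by move: (red y yt') ys; rewrite mem_column_set => /negbTE->.
rewrite Es' mem_column_set in yt'; rewrite mem_column_set in ys.
case/andP: ys => _ /eqP <-; case/andP: yt' => _ /eqP ->.
by rewrite -Es'; apply: nth_subset_covered.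
Qed.

Lemma greedy_red_or_column Is : overlap_greedy_output pos colour Is ->
  forall t, (t < size Is)%N -> red_or_column (nth set0 Is t).
Proof.
move=> [greedy _]; elim/ltn_ind => t IH tIs.
have [C_ne [[monoI islI] best]] := greedy t tIs.
set I := nth set0 Is t in monoI islI best *; set C := covered Is t in C_ne best *.
have shape t' : (t' < minn t (size Is))%N -> red_or_column (nth set0 Is t').
  by rewrite leq_min => /andP[??]; apply: IH.
case: (boolP [exists x in I, x \in blue]) => [/exists_inP[x0 x0I bx0]|no_blue]; last first.
  by left => x xI; apply: contra no_blue => bx; apply/exists_inP; exists x.
have Ib : {subset I <= blue}.
  by move=> x xI; rewrite -colour_eq0 (monoI x x0) // colour_eq0.
right; case: (boolP [exists s, [disjoint column_set s & C]]) => [/existsP[s dis]|all_met].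
  have := (best _ (column_set_mono_island s)).1; rewrite (setDidPl dis) card_column_set.
  move=> le; apply: large_blue_island_column islI Ib (leq_trans le _).
  exact: subset_leq_card (subsetDl _ _).
exfalso; rewrite negb_exists in all_met.
have [u _ uC] : exists2 u, u \in [set: 'I_npts] & u \notin C.
  by apply/subsetPn; rewrite subTset.
have := (best _ (set1_mono_island u)).1.
have -> : [set u] :\: C = [set u] by apply/setDidPl; rewrite disjoints1.
suff -> : I :\: C = set0 by rewrite cards0 cards1.
apply/setP => x; rewrite !inE; apply/negP => /andP[xC xI]; apply/negP: xC; rewrite negbK.
apply: (subsetP (met_column_set_covered shape (forallP all_met (column x)))).
by rewrite mem_column_set (Ib x xI) eqxx.
Qed.

Definition redL (a s : 'I_M.+1) := pt (inl (a, inord (4 * s) : 'I_width)).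
Definition redR (a s : 'I_M.+1) := pt (inl (a, inord (4 * s).+1 : 'I_width)).
Definition blueD (a s : 'I_M.+1) := pt (inr (s, inord a : 'I_M.+2)).
Definition blueU (a s : 'I_M.+1) := pt (inr (s, inord a.+1 : 'I_M.+2)).

Lemma four_column_lt_width (s : 'I_M.+1) : ((4 * s).+1 < width)%N.
Proof. by have := ltn_ord s; rewrite /width; lia. Qed.

Lemma pos_redL a s : pos (redL a s) = (4 * (s : nat)%:R, 2 * (a : nat)%:R + 2).
Proof. by rewrite pos_red inordK ?natrM // ltnW // four_column_lt_width. Qed.

Lemma pos_redR a s : pos (redR a s) = (4 * (s : nat)%:R + 1, 2 * (a : nat)%:R + 2).
Proof. by rewrite pos_red inordK ?four_column_lt_width // -natr1 natrM. Qed.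

Lemma pos_blueD a s : pos (blueD a s) = (4 * (s : nat)%:R + 2^-1, 2 * (a : nat)%:R + 1).
Proof. by rewrite /pos ptK /= inordK // ltnS ltnW. Qed.

Lemma pos_blueU a s : pos (blueU a s) = (4 * (s : nat)%:R + 2^-1, 2 * (a : nat)%:R + 3).
Proof.
by rewrite /pos ptK /= inordK ?ltnS ?leq_ord // -natr1; congr pair; lra.
Qed.

Lemma colour_red a x : colour (pt (inl (a, x))) = inord a.+1.
Proof. by rewrite /colour ptK. Qed.

Lemma colour_blueU a s : colour (blueU a s) = ord0.
Proof. exact/blue_colour/blue_pt_inr. Qed.

Lemma column_blueU a s : column (blueU a s) = s.
Proof. by rewrite /column ptK. Qed.

Section CompatibleFamily.
Variable Q : {set {set 'I_npts}}.
Hypotheses (Q_island : forall J, J \in Q -> island pos J)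
  (Q_mono : forall J, J \in Q -> monochromatic colour J)
  (Q_column : forall J, J \in Q -> {in J &, forall u v, u \in blue -> column u = column v})
  (Q_cover : forall x, exists2 J, J \in Q & x \in J)
  (Q_disjoint : forall J K, J \in Q -> K \in Q -> J != K -> hulls_disjoint pos J K).

Definition piece x := odflt set0 [pick J in Q | x \in J].

Lemma pieceP x : piece x \in Q /\ x \in piece x.
Proof.
rewrite /piece; case: pickP => [J /andP[]|none] //=.
by have [J JQ xJ] := Q_cover x; move: (none J); rewrite JQ xJ.
Qed.

Lemma piece_eq J x : J \in Q -> x \in J -> piece x = J.
Proof.
move=> JQ xJ; have [xQ x_x] := pieceP x; apply/eqP; apply/negPn/negP => neJ.
by apply: (Q_disjoint xQ JQ neJ); exists (pos x); split; apply: in_hull_mem.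
Qed.

Lemma mem_piece_eq x y : y \in piece x -> piece y = piece x.
Proof. exact/piece_eq/(pieceP x).1. Qed.

Lemma piece_eq_mem x y : piece x = piece y -> y \in piece x.
Proof. by move=> ->; exact: (pieceP y).2. Qed.

Lemma piece_colour x y : y \in piece x -> colour y = colour x.
Proof. by move=> yx; apply: Q_mono (pieceP x).1 _ _ yx (pieceP x).2. Qed.

Lemma piece_conv w x y z (l : R) : 0 <= l <= 1 -> y \in piece w -> z \in piece w ->
  pos x = (l * (pos y).1 + (1 - l) * (pos z).1, l * (pos y).2 + (1 - l) * (pos z).2) ->
  x \in piece w.
Proof.
move=> l01 yw zw ex; apply: Q_island (pieceP w).1 _ _.
by rewrite ex; apply: in_hull_conv (in_hull_mem pos yw) (in_hull_mem pos zw) l01 erefl.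
Qed.

(* The segments [redL, redR] and [blueD, blueU] cross at (4s + 1/2, 2a + 2). *)
Lemma crossing a s : piece (redL a s) = piece (redR a s) ->
  piece (blueD a s) = piece (blueU a s) -> False.
Proof.
move=> eLR eDU; have [LQ LL] := pieceP (redL a s); have [DQ DD] := pieceP (blueD a s).
have RL : redR a s \in piece (redL a s) by rewrite eLR; exact: (pieceP _).2.
have UD : blueU a s \in piece (blueD a s) by rewrite eDU; exact: (pieceP _).2.
have neLD : piece (redL a s) != piece (blueD a s).
  apply/eqP => eLD; move: DD; rewrite -eLD => /piece_colour.
  by rewrite colour_red /colour ptK => /eqP; rewrite eq_sym (negbTE (inordS_neq0 a)).
apply: (Q_disjoint LQ DQ neLD); exists (4 * (s : nat)%:R + 2^-1, 2 * (a : nat)%:R + 2); split.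
- apply: (in_hull_conv (l := 2^-1) (in_hull_mem pos LL) (in_hull_mem pos RL) (half_bounds R)).
  by rewrite pos_redL pos_redR /=; congr pair; field.
- apply: (in_hull_conv (l := 2^-1) (in_hull_mem pos DD) (in_hull_mem pos UD) (half_bounds R)).
  by rewrite pos_blueD pos_blueU /=; congr pair; field.
Qed.

Lemma row_piece a (s s' : 'I_M.+1) : (s < s')%N -> redR a s \in piece (redR a s') ->
  piece (redL a s') = piece (redR a s').
Proof.
move=> lt_ss' R_s; apply: mem_piece_eq.
have d_ge1 : 1 <= (s' : nat)%:R - (s : nat)%:R :> R by rewrite lerBrDl natr1 ler_nat.
apply: (piece_conv (l := (4 * ((s' : nat)%:R - (s : nat)%:R))^-1) _ R_s (pieceP _).2).
  by apply: invr_bounds; lra.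
by rewrite pos_redL !pos_redR /=; congr pair; field; lra.
Qed.

Lemma column_piece (a a' s : 'I_M.+1) : (a < a')%N -> blueU a s \in piece (blueU a' s) ->
  piece (blueD a' s) = piece (blueU a' s).
Proof.
move=> lt_aa' U_a; apply: mem_piece_eq.
have d_ge1 : 1 <= (a' : nat)%:R - (a : nat)%:R :> R by rewrite lerBrDl natr1 ler_nat.
apply: (piece_conv (l := ((a' : nat)%:R - (a : nat)%:R)^-1) _ U_a (pieceP _).2).
  exact: invr_bounds.
by rewrite pos_blueD !pos_blueU /=; congr pair; field; lra.
Qed.

(* By [crossing], at least one of the pairs {redL, redR} and {blueD, blueU} is split. *)
Definition witness (c : 'I_M.+1 * 'I_M.+1) : {set 'I_npts} :=
  let: (a, s) := c in
  if piece (redL a s) != piece (redR a s) then piece (redR a s) else piece (blueU a s).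

Lemma witness_inj : injective witness.
Proof.
move=> [a s] [a' s'] /=; case: ifPn => LR; case: ifPn => LR' /piece_eq_mem e.
- have ea : a' = a by move: (piece_colour e); rewrite !colour_red => /inordS_inj.
  subst a'; case: (ltngtP s s') => [lt|lt|/val_inj-> //].
    by move: LR'; rewrite (row_piece lt) ?eqxx // (mem_piece_eq e) (pieceP _).2.
  by move: LR; rewrite (row_piece lt e) eqxx.
- move: (piece_colour e); rewrite colour_blueU colour_red => /eqP.
  by rewrite eq_sym (negbTE (inordS_neq0 a)).
- move: (piece_colour e); rewrite colour_blueU colour_red => /eqP.
  by rewrite (negbTE (inordS_neq0 a')).
- have es : s' = s.
    have [sQ sx] := pieceP (blueU a s).
    by rewrite -(column_blueU a s) -(column_blueU a' s') (Q_column sQ e sx) ?blue_pt_inr.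
  subst s'; move/negbNE/eqP in LR; move/negbNE/eqP in LR'.
  case: (ltngtP a a') => [lt|lt|/val_inj-> //]; exfalso.
    by apply: (crossing LR'); apply: column_piece lt _; rewrite (mem_piece_eq e) (pieceP _).2.
  exact: crossing LR (column_piece lt e).
Qed.

Lemma card_compatible_ge : (M.+1 * M.+1 <= #|Q|)%N.
Proof.
have <- : #|witness @: [set: 'I_M.+1 * 'I_M.+1]| = (M.+1 * M.+1)%N.
  by rewrite card_imset ?cardsT ?card_prod ?card_ord //; exact: witness_inj.
apply/subset_leq_card/subsetP => J /imsetP[[a s] _ ->] /=.
by case: ifP => _; exact: (pieceP _).1.
Qed.

End CompatibleFamily.

Lemma card_compatible_greedy Is Q : overlap_greedy_output pos colour Is ->
  compatible pos Q Is -> (M.+1 * M.+1 <= #|Q|)%N.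
Proof.
move=> greedy compQ; have [Q_island [F [_ [_ [_ [_ Q_disjoint]]]]]] := compQ.
apply: card_compatible_ge Q_island (compatible_mono compQ greedy) _
  (compatible_cover compQ greedy) Q_disjoint.
move=> J /(compatible_subset_nth compQ)[t tIs /subsetP JI] u v uJ vJ bu.
case: (greedy_red_or_column greedy tIs) => [red|[s Is_t]].
  by have := red u (JI u uJ); rewrite bu.
have := JI u uJ; have := JI v vJ; rewrite Is_t !mem_column_set.
by case/andP=> _ /eqP-> /andP[_ /eqP->].
Qed.

Lemma height_lt i : (height (site_of i) < 2 * M + 4)%N.
Proof. by case: (site_of i) => [[a _]|[_ l]] /=; [have := ltn_ord a | have := ltn_ord l]; lia. Qed.

Definition height_ord i : 'I_(2 * M + 4) := Ordinal (height_lt i).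

Definition layers : {set {set 'I_npts}} := preim_partition height_ord [set: 'I_npts].

Lemma height_colour i j : height (site_of i) = height (site_of j) -> colour i = colour j.
Proof.
rewrite /colour; case: (site_of i) => [[a x]|[s l]]; case: (site_of j) => [[a' x']|[s' l']] //=;
  try lia.
by move=> e; congr (inord _.+1); lia.
Qed.

Lemma layersP B : B \in layers -> exists x, B = [set y | height_ord x == height_ord y].
Proof. by case/imsetP => x _ ->; exists x; apply/setP => y; rewrite !inE. Qed.

Lemma in_hull_layer x q :
  in_hull pos [set y | height_ord x == height_ord y] q -> q.2 = (height (site_of x))%:R.
Proof. by apply: in_hull_snd => y; rewrite inE pos_snd => /eqP [->]. Qed.

Lemma layers_partition : island_partition pos colour layers.
Proof.
split; [exact: preim_partitionP | split].
- move=> B /layersP[x ->]; split=> [y z|j /in_hull_layer e].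
    by rewrite !inE => /eqP[hy] /eqP[hz]; apply: height_colour; rewrite -hy -hz.
  by rewrite inE; apply/eqP/val_inj/eqP; rewrite /= -(eqr_nat R) -e pos_snd.
- move=> B C /layersP[x ->] /layersP[y ->] neBC [q [/in_hull_layer qx /in_hull_layer qy]].
  move/eqP: neBC; apply; apply/setP => z; rewrite !inE; congr (_ == _).
  by apply/val_inj/eqP; rewrite /= -(eqr_nat R) -qx -qy.
Qed.

Lemma card_layers : (#|layers| <= 2 * M + 4)%N.
Proof.
have -> : layers = (fun h => [set y in [set: 'I_npts] | h == height_ord y]) @: (height_ord @: setT).
  by rewrite -imset_comp.
by rewrite (leq_trans (leq_imset_card _ _)) // (leq_trans (max_card _)) // card_ord.
Qed.

Lemma island_partition_card_ge P : island_partition pos colour P -> (M.+1 <= #|P|)%N.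
Proof.
move=> [/and3P[/eqP coverP _ _] [monoP _]].
pose row_block (a : 'I_M.+1) := pblock P (pt (inl (a, ord0))).
have row_blockP a : row_block a \in P /\ pt (inl (a, ord0)) \in row_block a.
  by rewrite pblock_mem ?mem_pblock coverP inE.
have row_block_inj : injective row_block.
  move=> a a' e; have [aP aa] := row_blockP a; have [_ aa'] := row_blockP a'.
  rewrite -e in aa'; have := (monoP _ aP).1 _ _ aa aa'.
  by rewrite /colour !ptK => /inordS_inj.
rewrite -[M.+1]card_ord -(card_imset _ row_block_inj).
by apply/subset_leq_card/subsetP => B /imsetP[a _ ->]; exact: (row_blockP a).1.
Qed.

Lemma card_npts : npts = (M.+1 * width + M.+1 * M.+2)%N.
Proof. by rewrite /npts card_sum !card_prod !card_ord. Qed.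

End Construction.

Theorem lemma4 (R : realType) :
  exists c : R, 0 < c /\
  forall N : nat, exists (n k : nat) (p : 'I_n -> R * R) (col : 'I_n -> 'I_k)
                         (opt : nat),
    (2 <= k)%N /\ injective p /\ is_OptP p col opt /\
    (N <= n)%N /\ (N <= opt)%N /\
        forall (Is : seq {set 'I_n}) (Q : {set {set 'I_n}}),
          overlap_greedy_output p col Is -> compatible p Q Is ->
          c * Num.max (opt%:R) (Num.sqrt (n%:R)) * opt%:R <= #|Q|%:R.
Proof.
exists 16^-1; split; first by rewrite invr_gt0 ltr0n.
move=> N; have [opt optP opt_le] := is_OptP_exists (layers_partition R N).
have opt_gt : (N < opt)%N.
  by have [[P [partP <-]] _] := optP; exact: island_partition_card_ge partP.
have opt_le4 : (opt <= 2 * N + 4)%N := leq_trans opt_le (card_layers N).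
exists (npts N), N.+2, (pos R (M := N)), (@colour N), opt.
split; first by [].
split; first exact: pos_inj.
split; first exact: optP.
split; first by rewrite card_npts /width; lia.
split; first exact: ltnW.
move=> Is Q greedy compQ.
apply: max_sqrt_mul_le (card_compatible_greedy greedy compQ); first by lia.
by rewrite card_npts /width; lia.
Qed.
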